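(* Let $p \in (0,\frac{1}{2})$ be a constant. No (possibly randomized) sorting algorithm can achieve, on a random instance with $n$ elements, maximum dislocation $o(\log n)$ with high probability (i.e., with probability at least $1 - \frac{1}{n}$).
   Context: Setting: the elements are $S=\{1,\dots,n\}$ with the natural order. A random instance consists of an input permutation of $S$ chosen uniformly at random together with comparison outcomes: for each pair $i<j$ independently, the comparison reports the wrong order with probability exactly $p$ and the correct order otherwise; outcomes are persistent (repeated comparisons of the same pair return the same outcome). The algorithm accesses the elements only via these comparisons and outputs a permutation of $S$. For a sequence and element $x$, the dislocation of $x$ is the absolute difference between its position and its true rank; the maximum dislocation is the maximum over all elements. *)

From HB Require Import structures.
From mathcomp Require Import all_boot all_order all_algebra all_fingroup.
From mathcomp Require Import all_classical all_reals all_analysis.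

Set Implicit Arguments. Unset Strict Implicit. Unset Printing Implicit Defensive.
Import Order.TTheory GRing.Theory Num.Theory.
Local Open Scope ring_scope.

(* Elements S = {1,...,n} are represented by 'I_n = {0,...,n-1}, with the
   natural order; the true rank of element x is x itself (shifted by one,
   which does not affect dislocations). *)

Definition upair (n : nat) := {x : 'I_n * 'I_n | (x.1 < x.2)%N}.

(* Error pattern: e u = true iff the comparison of the pair u reports the
   wrong order.  Persistent by construction (one bit per pair). *)
Definition errors (n : nat) := {ffun upair n -> bool}.

Definition errbit n (e : errors n) (x y : 'I_n) : bool :=
  if @insub _ (fun z : 'I_n * 'I_n => (z.1 < z.2)%N) (upair n) (x, y)
  is Some u then e u else false.

(* Input: the permutation pi; input position a holds element pi a.
   report pi e a b = the comparison of the elements at input positions a, b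
   reports "element at a < element at b". *)
Definition report n (pi : {perm 'I_n}) (e : errors n) (a b : 'I_n) : bool :=
  let x := pi a in let y := pi b in
  if (x < y)%N then ~~ errbit e x y
  else if (y < x)%N then errbit e y x
  else false.

(* Everything the algorithm can learn: all comparison outcomes between
   input positions. *)
Definition tourn (n : nat) := {ffun 'I_n * 'I_n -> bool}.

Definition observed n (pi : {perm 'I_n}) (e : errors n) : tourn n :=
  [ffun ab : 'I_n * 'I_n => report pi e ab.1 ab.2].

(* A deterministic algorithm: its output depends on the instance only through
   comparison outcomes; it outputs an ordering of the input positions
   (output position k receives the element at input position tau k). *)
Definition detalg (n : nat) := {ffun tourn n -> {perm 'I_n}}.

(* A randomized algorithm: a probability distribution over deterministic ones. *)
Definition is_distr (T : finType) (R : realType) (mu : {ffun T -> R}) : Prop :=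
  (forall t, 0 <= mu t) /\ \sum_(t : T) mu t = 1.

Definition distn (i j : nat) : nat := maxn (i - j) (j - i).

Definition maxdisl n (pi : {perm 'I_n}) (tau : {perm 'I_n}) : nat :=
  \max_(k : 'I_n) distn k (pi (tau k)).

Definition errweight (R : realType) (p : R) n (e : errors n) : R :=
  \prod_(u : upair n) (if e u then p else 1 - p).

Definition success (R : realType) (p : R) n (mu : {ffun detalg n -> R}) (t : R) : R :=
  \sum_(A : detalg n) mu A *
    \sum_(pi : {perm 'I_n}) \sum_(e : errors n)
      ((n`!)%:R^-1 * errweight p e *
       (if ((maxdisl pi (A (observed pi e)))%:R <= t) then 1 else 0)).

Definition little_o_log (R : realType) (f : nat -> R) : Prop :=
  forall eps : R, 0 < eps ->
    exists N : nat, forall n : nat, (N <= n)%N -> `|f n| <= eps * ln (n%:R : R).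

From HB Require Import structures.
From mathcomp Require Import all_boot all_order all_algebra all_fingroup.
From mathcomp Require Import all_classical all_reals all_analysis.
From mathcomp Require Import zify ring lra.
Import Order.TTheory GRing.Theory Num.Theory.
Set Implicit Arguments. Unset Strict Implicit. Unset Printing Implicit Defensive.
Local Open Scope ring_scope.

(* Let x be the smallest element and y the element of rank k.  Relabelling the
   input by the transposition (x y) and the comparison errors accordingly gives
   an instance with exactly the same comparison outcomes, so every algorithm
   produces the same output on both; the output position holding x in one
   instance holds y in the other, hence one of the two outputs has dislocation
   at least k/2.  The relabelled errors differ from the original ones only on
   the at most 2(k+1) pairs inverted by (x y), so with q = p/(1-p) <= 1 its
   probability is at least r = q^(2k+2) times the original one, and pairing
   the instances shows that dislocation below k/2 fails with probability at
   least r/(1+r).  For n = a^k with a q^4 >= 4, an o(log n) bound is below k/2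
   while r n >= 4, contradicting a failure probability of at most 1/n. *)

Section Relabelling.
Variable n : nat.
Implicit Types (e : errors n) (s pi : {perm 'I_n}) (u v : 'I_n) (w : upair n).

Definition outcome e u v : bool :=
  if (u < v)%N then ~~ errbit e u v else if (v < u)%N then errbit e v u else false.

Lemma reportE pi e a b : report pi e a b = outcome e (pi a) (pi b).
Proof. by []. Qed.

Lemma errbitE e u v (huv : (u < v)%N) : errbit e u v = e (exist _ (u, v) huv).
Proof. by rewrite /errbit insubT; congr (e _); apply: val_inj. Qed.

Lemma outcome_sym e u v : u != v -> outcome e v u = ~~ outcome e u v.
Proof.
move=> neq_uv; rewrite /outcome; case: (ltngtP u v) => // [_|/val_inj eq_uv].
  by rewrite negbK.
by rewrite eq_uv eqxx in neq_uv.
Qed.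

Definition inversions s := [pred w : upair n | ~~ (s (val w).1 < s (val w).2)%N].

Definition sort_pair u v : 'I_n * 'I_n := if (u < v)%N then (u, v) else (v, u).

Definition upair_map s w : upair n := insubd w (sort_pair (s (val w).1) (s (val w).2)).

(* Under [relabel_errors s e] the elements [s u] and [s v] are compared as [u]
   and [v] are under [e], so for an involution [s] the instances [(pi, e)] and
   [(pi * s, relabel_errors s e)] yield the same observations. *)
Definition relabel_errors s e : errors n :=
  [ffun w => ~~ outcome e (s (val w).1) (s (val w).2)].

Variable s : {perm 'I_n}.
Hypothesis sK : involutive s.

Lemma outcome_relabel e u v : outcome (relabel_errors s e) (s u) (s v) = outcome e u v.
Proof.
rewrite {1}/outcome; case: (ltngtP (s u) (s v)) => [lt_uv|lt_vu|/val_inj/perm_inj->].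
- by rewrite (errbitE _ lt_uv) ffunE /= !sK negbK.
- rewrite (errbitE _ lt_vu) ffunE /= !sK outcome_sym ?negbK //.
  by apply: contraTneq lt_vu => ->; rewrite ltnn.
- by rewrite /outcome ltnn.
Qed.

Lemma observed_relabel pi e : observed (pi * s) (relabel_errors s e) = observed pi e.
Proof. by apply/ffunP => -[a b]; rewrite !ffunE /= !reportE !permM outcome_relabel. Qed.

Lemma relabel_errorsK : involutive (relabel_errors s).
Proof.
move=> e; apply/ffunP => -[[a b] lt_ab].
by rewrite ffunE outcome_relabel /outcome /= lt_ab (errbitE _ lt_ab) negbK.
Qed.

Lemma upair_map_val w : val (upair_map s w) = sort_pair (s (val w).1) (s (val w).2).
Proof.
rewrite /upair_map insubdK // /sort_pair unfold_in.
case: w => [[a b] /= lt_ab]; case: ifP => //=; case: ltngtP => // /val_inj/perm_inj eq_ab.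
by rewrite eq_ab ltnn in lt_ab.
Qed.

Lemma upair_mapK : involutive (upair_map s).
Proof.
move=> [[a b] /= lt_ab]; apply: val_inj; rewrite !upair_map_val /sort_pair /=.
case: (ltngtP (s a) (s b)) => [_|_|/val_inj/perm_inj eq_ab] /=; rewrite !sK ?lt_ab //.
  by rewrite ltnNge (ltnW lt_ab).
by rewrite eq_ab ltnn in lt_ab.
Qed.

Lemma relabel_errors_map e w :
  relabel_errors s e (upair_map s w) = if w \in inversions s then ~~ e w else e w.
Proof.
rewrite ffunE upair_map_val inE; case: w => [[a b] /= lt_ab]; rewrite /sort_pair.
case: ifP => _ /=; rewrite !sK /outcome (errbitE _ lt_ab).
  by rewrite lt_ab negbK.
by rewrite ltnNge (ltnW lt_ab) /= lt_ab.
Qed.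

End Relabelling.

Lemma inversions_tperm n (x y : 'I_n) (w : upair n) : (x < y)%N ->
  w \in inversions (tperm x y) -> ((val w).2 <= y)%N && (((val w).1 == x) || ((val w).2 == y)).
Proof.
case: w => [[a b] /= lt_ab] lt_xy; rewrite inE /=; move: lt_ab lt_xy.
by case: tpermP => [->|->|_ _]; case: tpermP => [->|->|_ _];
  rewrite ?eqxx ?orbT ?andbT //=; lia.
Qed.

Lemma card_inversions_tperm n (x y : 'I_n) : (x < y)%N ->
  (#|inversions (tperm x y)| <= (val y).+1 * 2)%N.
Proof.
move=> lt_xy.
pose other_end (w : upair n) : 'I_(val y).+1 * bool :=
  (inord (if (val w).1 == x then val (val w).2 else val (val w).1), (val w).1 == x).
have ->: ((val y).+1 * 2 = #|{: 'I_(val y).+1 * bool}|)%N.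
  by rewrite card_prod card_ord card_bool.
apply: (@leq_card_in _ _ other_end) => -[[a b] /= lt_ab] [[c d] /= lt_cd].
move=> /(inversions_tperm lt_xy) /andP[le_by a_x_or_b_y].
move=> /(inversions_tperm lt_xy) /andP[le_dy c_x_or_d_y] [eq_other eq_first].
apply: val_inj; move: le_by le_dy eq_other eq_first a_x_or_b_y c_x_or_d_y => /= le_by le_dy.
case: eqP => [->|_]; case: eqP => [->|_] //= /(congr1 (@nat_of_ord _)).
  by rewrite !inordK ?ltnS // => /val_inj->.
by rewrite !inordK => [/val_inj-> _ /eqP-> /eqP-> //||]; lia.
Qed.

Lemma errweight_sum (R : realType) (p : R) n : \sum_(e : errors n) errweight p e = 1.
Proof.
rewrite /errweight -(bigA_distr_bigA (fun w (b : bool) => if b then p else 1 - p)).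
by apply: big1 => w _; rewrite big_bool /= addrC subrK.
Qed.

Lemma errweight_ge0 (R : realType) (p : R) n (e : errors n) :
  0 <= p <= 1 -> 0 <= errweight p e.
Proof. by move=> /andP[? ?]; apply: prodr_ge0 => w _; case: ifP => _; lra. Qed.

Lemma odds_ge0 (R : realType) (p : R) : 0 <= p <= 2^-1 -> 0 <= p / (1 - p).
Proof. by move=> /andP[? ?]; rewrite divr_ge0 //; lra. Qed.

Lemma odds_le1 (R : realType) (p : R) : 0 <= p <= 2^-1 -> p / (1 - p) <= 1.
Proof. by move=> /andP[? ?]; rewrite ler_pdivrMr ?mul1r; lra. Qed.

Lemma errweight_relabel_ge (R : realType) (p : R) n (s : {perm 'I_n}) (e : errors n) :
  0 <= p <= 2^-1 -> involutive s ->
  (p / (1 - p)) ^+ #|inversions s| * errweight p e <= errweight p (relabel_errors s e).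
Proof.
move=> p_small sK; have q_ge0 := odds_ge0 p_small; have q_le1 := odds_le1 p_small.
move: p_small => /andP[p_ge0 p_le_half]; set q := p / (1 - p).
have qp : q * (1 - p) = p by rewrite divfK // subr_eq0; apply: contraTneq p_le_half => <-; lra.
rewrite /errweight [X in _ <= X](reindex_inj (inv_inj (upair_mapK sK))) /=.
rewrite -prodr_const big_mkcond -big_split /=; apply: ler_prod => w _.
rewrite relabel_errors_map //; case: (w \in _); case: (e w) => /=; nra.
Qed.

Lemma pairing_lower_bound (R : realFieldType) (T : finType) (W b : T -> R) (phi : T -> T) (r : R) :
  injective phi -> (forall i, 0 <= W i) -> \sum_i W i = 1 -> (forall i, 0 <= b i) ->
  (forall i, 1 <= b i + b (phi i)) -> (forall i, r * W i <= W (phi i)) -> 0 <= r ->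
  r <= (1 + r) * \sum_i W i * b i.
Proof.
move=> phi_inj W_ge0 W_sum b_ge0 b_pair W_phi r_ge0.
have b_phi : r * \sum_i W i * b (phi i) <= \sum_i W i * b i.
  rewrite [X in _ <= X](reindex_inj phi_inj) mulr_sumr; apply: ler_sum => i _.
  by rewrite mulrA ler_wpM2r.
have b_total : r <= r * \sum_i W i * b i + r * \sum_i W i * b (phi i).
  rewrite -mulrDr -big_split /= -{1}(mulr1 r) -W_sum ler_wpM2l //.
  by apply: ler_sum => i _; rewrite -mulrDr -{1}(mulr1 (W i)) ler_wpM2l.
lra.
Qed.

(* The output position that receives [x] under [pi] receives [y] under
   [pi * tperm x y]. *)
Lemma distn_le_maxdisl_tperm n (pi tau : {perm 'I_n}) (x y : 'I_n) :
  (distn x y <= maxdisl pi tau + maxdisl (pi * tperm x y) tau)%N.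
Proof.
pose k := (tau^-1 (pi^-1 x))%g.
have pi_k : pi (tau k) = x by rewrite /k !permKV.
have pi_s_k : (pi * tperm x y)%g (tau k) = y by rewrite permM pi_k tpermL.
have disl_x := @leq_bigmax _ (fun k : 'I_n => distn k (pi (tau k))) k.
have disl_y := @leq_bigmax _ (fun k : 'I_n => distn k ((pi * tperm x y)%g (tau k))) k.
move: disl_x disl_y; rewrite /= pi_k pi_s_k => disl_x disl_y.
by apply: leq_trans (leq_add disl_x disl_y); rewrite /distn; lia.
Qed.

Definition det_success (R : realType) (p : R) n (A : detalg n) (t : R) : R :=
  \sum_(pi : {perm 'I_n}) \sum_(e : errors n)
    ((n`!)%:R^-1 * errweight p e *
     (if ((maxdisl pi (A (observed pi e)))%:R <= t) then 1 else 0)).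

Lemma successE (R : realType) (p : R) n (mu : {ffun detalg n -> R}) t :
  success p mu t = \sum_A mu A * det_success p A t.
Proof. by []. Qed.

Section SuccessGap.
Variables (R : realType) (p : R).
Hypothesis p_small : 0 <= p <= 2^-1.
Local Notation q := (p / (1 - p)).

Lemma det_success_gap n (A : detalg n) (x y : 'I_n) (t : R) :
  2 * t < (distn x y)%:R ->
  q ^+ #|inversions (tperm x y)| <=
  (1 + q ^+ #|inversions (tperm x y)|) * (1 - det_success p A t).
Proof.
move=> t_small; set s := tperm x y.
have sK : involutive s by move=> z; rewrite /s tpermK.
pose T := ({perm 'I_n} * errors n)%type.
pose W (I : T) := (n`!)%:R^-1 * errweight p I.2.
pose good (I : T) : R := if ((maxdisl I.1 (A (observed I.1 I.2)))%:R <= t) then 1 else 0.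
pose phi (I : T) : T := ((I.1 * s)%g, relabel_errors s I.2).
have W_sum : \sum_I W I = 1.
  rewrite -(pair_bigA _ (fun pi e => W (pi, e))) /=.
  under eq_bigr => pi _ do rewrite /W /= -mulr_sumr errweight_sum mulr1.
  by rewrite sumr_const card_Sn -[_ *+ _]mulr_natr mulVf // pnatr_eq0 -lt0n fact_gt0.
have -> : 1 - det_success p A t = \sum_I W I * (1 - good I).
  rewrite /det_success (pair_bigA _ (fun pi e => W (pi, e) * good (pi, e))) /=.
  by rewrite -{1}W_sum -sumrB; apply: eq_bigr => I _; rewrite mulrBr mulr1.
apply: pairing_lower_bound.
- apply: (@can_inj _ _ phi phi) => -[pi e]; rewrite /phi /= relabel_errorsK //.
  by congr pair; apply/permP => z; rewrite !permM sK.
- by move=> I; rewrite mulr_ge0 ?invr_ge0 ?errweight_ge0 //; move: p_small => /andP[? ?]; lra.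
- exact: W_sum.
- by move=> I; rewrite /good; case: ifP; rewrite subr_ge0 ?ler01.
- move=> [pi e]; rewrite /good /phi /= observed_relabel //.
  have := distn_le_maxdisl_tperm pi (A (observed pi e)) x y.
  rewrite -(ler_nat R) natrD; case: ifP; case: ifP; lra.
- move=> [pi e]; rewrite /W /phi /= mulrCA ler_wpM2l ?invr_ge0 //.
  exact: errweight_relabel_ge.
- by rewrite exprn_ge0 // odds_ge0.
Qed.

Lemma success_gap n (mu : {ffun detalg n -> R}) (x y : 'I_n) (t : R) :
  is_distr mu -> 2 * t < (distn x y)%:R ->
  q ^+ #|inversions (tperm x y)| <=
  (1 + q ^+ #|inversions (tperm x y)|) * (1 - success p mu t).
Proof.
move=> [mu_ge0 mu_sum] t_small; set r := _ ^+ _.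
rewrite successE -[X in _ * (X - _)]mu_sum -sumrB mulr_sumr.
rewrite -[X in X <= _](mulr1 r) -[X in r * X]mu_sum mulr_sumr; apply: ler_sum => A _.
rewrite -[X in _ * (X - _)]mulr1 -mulrBr mulrCA [r * _]mulrC ler_wpM2l //.
exact: det_success_gap.
Qed.

End SuccessGap.

Lemma gap_whp_bound (R : realFieldType) (r s : R) (n : nat) : (0 < n)%N -> 0 <= r ->
  r <= (1 + r) * (1 - s) -> 1 - n%:R^-1 <= s -> r * n%:R <= 1 + r.
Proof.
move=> n_gt0 r_ge0 r_le s_ge; rewrite -ler_pdivlMr ?ltr0n //.
by apply: (le_trans r_le); rewrite ler_wpM2l //; lra.
Qed.

Lemma exists_nat_mul_ge (R : realType) (c : R) : 0 < c ->
  exists2 a : nat, (1 < a)%N & 4 <= a%:R * c.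
Proof.
move=> c_gt0; pose a := (Num.Def.archi_bound (4 / c)).+2.
exists a => //; rewrite -ler_pdivrMr //.
have := @archi_boundP R (4 / c) (ltW (divr_gt0 (ltr0n _ 4) c_gt0)).
by move=> /ltW /le_trans; apply; rewrite ler_nat /a; lia.
Qed.

Lemma little_o_log_pow (R : realType) (f : nat -> R) (a : nat) : (1 < a)%N ->
  little_o_log f -> exists K, forall k, (K <= k)%N -> f (a ^ k)%N <= k%:R / 4.
Proof.
move=> a_gt1 f_small; have ln_a : 0 < ln (a%:R : R) by rewrite ln_gt0 // ltr1n.
have eps_gt0 : 0 < (4 * ln (a%:R : R))^-1 by rewrite invr_gt0 mulr_gt0.
have [K f_le] := f_small _ eps_gt0.
exists K => k le_Kk; apply: le_trans (ler_norm _) _.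
apply: le_trans (f_le _ (leq_trans le_Kk (ltnW (ltn_expl k a_gt1)))) _.
rewrite natrX lnXn ?ltr0n 1?ltnW // -[ln _ *+ _]mulr_natr le_eqVlt.
by apply/orP; left; apply/eqP; field; rewrite gt_eqF.
Qed.

Lemma four_le_pow_mul (R : realFieldType) (q : R) (a k : nat) : (0 < k)%N ->
  4 <= a%:R * q ^+ 4 -> 4 <= q ^+ (4 * k) * (a ^ k)%N%:R.
Proof.
move=> k_gt0 a_large; rewrite natrX exprM -exprMn mulrC; apply: (le_trans a_large).
by rewrite ler_eXnr //; apply: le_trans a_large; rewrite ler1n.
Qed.

Theorem theorem6p2 (R : realType) (p : R) (hp0 : 0 < p) (hp1 : p < 2^-1) :
  ~ exists (mu : forall n : nat, {ffun detalg n -> R}) (f : nat -> R),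
      (forall n, is_distr (mu n)) /\ little_o_log f /\
      exists N : nat, forall n : nat, (N <= n)%N ->
        1 - (n%:R)^-1 <= success p (mu n) (f n).
Proof.
move=> [mu [f [mu_distr [f_small [N success_whp]]]]].
have p_small : 0 <= p <= 2^-1 by rewrite !ltW.
set q := p / (1 - p); have q_ge0 := odds_ge0 p_small; have q_le1 := odds_le1 p_small.
have q_gt0 : 0 < q by rewrite divr_gt0 // subr_gt0; lra.
have [a a_gt1 a_large] := exists_nat_mul_ge (exprn_gt0 4 q_gt0).
have [K f_le] := little_o_log_pow a_gt1 f_small.
pose k := maxn (maxn N K) 1; pose n := (a ^ k)%N.
have k_gt0 : (0 < k)%N by rewrite /k; lia.
have k_lt_n : (k < n)%N by rewrite ltn_expl.
have n_gt0 : (0 < n)%N := leq_ltn_trans (leq0n k) k_lt_n.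
pose x : 'I_n := Ordinal n_gt0; pose y : 'I_n := Ordinal k_lt_n.
have t_small : 2 * f n < (distn x y)%:R.
  have : f n <= k%:R / 4 by apply: f_le; rewrite /k; lia.
  have : 1 <= k%:R :> R by rewrite ler1n.
  by rewrite /distn /= sub0n subn0 max0n; lra.
set r := q ^+ #|inversions (tperm x y)|.
have r_small : r * n%:R <= 1 + r.
  apply: (gap_whp_bound n_gt0 (exprn_ge0 _ q_ge0) (success_gap p_small (mu_distr n) t_small)).
  by apply: success_whp; apply: leq_trans (ltnW k_lt_n); rewrite /k; lia.
have r_ge : q ^+ (4 * k) <= r.
  apply: (ler_wiXn2l q_ge0 q_le1).
  by apply: leq_trans (card_inversions_tperm (k_gt0 : (x < y)%N)) _; rewrite /=; lia.
have := ler_wpM2r (ler0n R n) r_ge.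
have : 4 <= q ^+ (4 * k) * n%:R := four_le_pow_mul k_gt0 a_large.
have : r <= 1 by rewrite exprn_ile1.
lra.
Qed.
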